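(* Let $p$ be one of $(12,\emptyset,\{0\})$, $(12,\{0\},\{1\})$, $(12,\{0\},\{2\})$, or any pattern in the same symmetry class as one of these. Then for all $n\ge1$, $a_n(p)=(n-1)!$.
   Context: For $n\ge1$, $\mathcal S_n$ is the set of permutations $\pi=\pi_1\cdots\pi_n$ of $[n]=\{1,\dots,n\}$. A bi-vincular pattern of length $k$ is a triple $p=(\sigma,X,Y)$ with $\sigma\in\mathcal S_k$ and $X,Y\subseteq\{0,1,\dots,k\}$ (written e.g. $(12,\{0\},\{1\})$). A permutation $\pi\in\mathcal S_n$ contains $p$ if there are indices $1\le i_1<\dots<i_k\le n$ such that $(\pi_{i_1},\dots,\pi_{i_k})$ is order-isomorphic to $\sigma$ and, letting $j_1<\dots<j_k$ be the values $\pi_{i_1},\dots,\pi_{i_k}$ sorted increasingly and setting $i_0=j_0=0$, $i_{k+1}=j_{k+1}=n+1$, one has $i_{x+1}=i_x+1$ for all $x\in X$ and $j_{y+1}=j_y+1$ for all $y\in Y$. Otherwise $\pi$ avoids $p$; $a_n(p)$ is the number of $\pi\in\mathcal S_n$ avoiding $p$. Symmetries: $p^{i}=(\sigma^{-1},Y,X)$, $p^{r}=(\sigma^{r},\{k-x:x\in X\},Y)$, $p^{c}=(\sigma^{c},X,\{k-y:y\in Y\})$ with $\sigma^r_j=\sigma_{k+1-j}$, $\sigma^c_j=k+1-\sigma_j$; the symmetry class of $p$ consists of all patterns obtained from $p$ by finitely many applications of these three maps. *)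

From mathcomp Require Import all_boot all_fingroup.
Set Implicit Arguments. Unset Strict Implicit. Unset Printing Implicit Defensive.

(* Permutations of [n] are modelled by 'S_n = {perm 'I_n} (values 0..n-1,
   i.e. shifted down by one; positions likewise 0..n-1). *)

Record bvpat := BVPat {
  bv_k : nat;
  bv_sigma : 'S_bv_k;
  bv_X : {set 'I_bv_k.+1};
  bv_Y : {set 'I_bv_k.+1} }.

(* Positions/values are shifted to 1-based, with i_0 = j_0 = 0 and
   i_{k+1} = j_{k+1} = n+1 ; the lists below are (i_0, ..., i_{k+1}) and
   (j_0, ..., j_{k+1}). *)
Definition occ_at (n : nat) (p : bvpat) (pi : 'S_n) (i : {ffun 'I_(bv_k p) -> 'I_n}) : bool :=
  let k := bv_k p in
  let ps := 0 :: [seq (i a).+1 | a <- enum 'I_k] ++ [:: n.+1] in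
  let js := 0 :: sort leq [seq (pi (i a)).+1 | a <- enum 'I_k] ++ [:: n.+1] in
  [&& [forall a : 'I_k, forall b : 'I_k, (a < b) ==> (i a < i b)],
      [forall a : 'I_k, forall b : 'I_k,
         (pi (i a) < pi (i b)) == (bv_sigma p a < bv_sigma p b)],
      [forall x in bv_X p, nth 0 ps x.+1 == (nth 0 ps x).+1] &
      [forall y in bv_Y p, nth 0 js y.+1 == (nth 0 js y).+1]].

Definition contains (n : nat) (p : bvpat) (pi : 'S_n) : bool :=
  [exists i : {ffun 'I_(bv_k p) -> 'I_n}, occ_at pi i].

Definition avoids (n : nat) (p : bvpat) (pi : 'S_n) : bool := ~~ contains p pi.

Definition a_n (p : bvpat) (n : nat) : nat := #|[set pi : 'S_n | avoids p pi]|.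

Definition rev_perm (k : nat) : 'S_k := perm (@rev_ord_inj k).

Definition pat_inv (p : bvpat) : bvpat :=
  @BVPat (bv_k p) (bv_sigma p)^-1 (bv_Y p) (bv_X p).

(* p^r = (sigma^r, {k - x : x in X}, Y), sigma^r_j = sigma_{k+1-j};
   note (s * t) x = t (s x) for mathcomp permutations. *)
Definition pat_rev (p : bvpat) : bvpat :=
  @BVPat (bv_k p) (rev_perm (bv_k p) * bv_sigma p) (@rev_ord (bv_k p).+1 @: bv_X p) (bv_Y p).

Definition pat_comp (p : bvpat) : bvpat :=
  @BVPat (bv_k p) (bv_sigma p * rev_perm (bv_k p)) (bv_X p) (@rev_ord (bv_k p).+1 @: bv_Y p).

Inductive sym_class (p : bvpat) : bvpat -> Prop :=
| sc_refl : sym_class p p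
| sc_inv q : sym_class p q -> sym_class p (pat_inv q)
| sc_rev q : sym_class p q -> sym_class p (pat_rev q)
| sc_comp q : sym_class p q -> sym_class p (pat_comp q).

Definition pat1 : bvpat := @BVPat 2 1 set0 [set (@inord 2 0)].
Definition pat2 : bvpat := @BVPat 2 1 [set (@inord 2 0)] [set (@inord 2 1)].
Definition pat3 : bvpat := @BVPat 2 1 [set (@inord 2 0)] [set (@inord 2 2)].

From mathcomp Require Import all_boot all_fingroup.
From mathcomp Require Import zify.
Set Implicit Arguments. Unset Strict Implicit. Unset Printing Implicit Defensive.

(* A pattern of length 2 is matched by a single pair of entries, and its
   conditions read directly on that pair.  The maps i, r, c turn pi into
   pi^-1, its reversal and its complement, which are bijections of S_n matching
   an occurrence of p in one permutation with an occurrence of p^i, p^r or p^c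
   in the other; hence a_n is constant on symmetry classes.  For the three base
   patterns avoidance pins down a single entry: pi avoids (12, {}, {0}) iff the
   value 1 is in last position, and avoids (12, {0}, {1}) or (12, {0}, {2}) iff
   pi_1 = n.  So each avoidance class has (n-1)! elements. *)

Implicit Types (n m : nat) (t : bool) (s : 'S_2) (X Y : {set 'I_3}) (p q : bvpat).

Lemma sort_leq_pair (x y : nat) : sort leq [:: x; y] = [:: minn x y; maxn x y].
Proof.
by rewrite /sort /= /minn /maxn; case: (ltngtP x y) => h //=; rewrite ?ltnW ?h // leqNgt h.
Qed.

Lemma forall_ord2 (P : pred 'I_2) : [forall a, P a] = P ord0 && P ord_max.
Proof.
apply/forallP/andP => [h|[P0 P1] a]; first by rewrite !h.
have [->|->] // : a = ord0 \/ a = ord_max.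
by case: a => -[|[|//]] lt; [left|right]; apply: val_inj.
Qed.

Lemma forall_in_imset (T : finType) (f : T -> T) (A : {set T}) (P : pred T) :
  [forall x in f @: A, P x] = [forall x in A, P (f x)].
Proof.
apply/forall_inP/forall_inP => [h x xA|h _ /imsetP[x xA ->]]; last exact: h.
by apply: h; rewrite imset_f.
Qed.

Lemma forall_in_set0 (T : finType) (P : pred T) : [forall x in set0, P x].
Proof. by apply/forall_inP => x; rewrite inE. Qed.

Lemma forall_in_set1 (T : finType) (z : T) (P : pred T) : [forall x in [set z], P x] = P z.
Proof. by apply/forall_inP/idP => [|Pz x /set1P ->]; [apply; rewrite inE|]. Qed.

Lemma perm_val_eq n (pi : 'S_n) (a b : 'I_n) : (pi a == pi b :> nat) = (a == b).
Proof. by rewrite val_eqE (inj_eq perm_inj). Qed.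

Lemma card_perm_maps m (x y : 'I_m) : #|[set pi : 'S_m | pi x == y]| = m.-1`!.
Proof.
rewrite -(card_preimset _ (mulIg (tperm x y))) -[m in RHS]card_ord -(cardsC1 x) -card_perm.
apply: eq_card => pi; rewrite !inE permM -{2}(tpermL x y) (inj_eq perm_inj).
apply/eqP/subsetP => [pix z|fix_pi]; first by rewrite !inE; apply: contra => /eqP ->; rewrite pix.
by apply/eqP/negPn/negP => /fix_pi; rewrite !inE eqxx.
Qed.

Definition bvpat2 s X Y : bvpat := @BVPat 2 s X Y.

Definition incr2 s : bool := s ord0 < s ord_max.

(* The constraint that an index of X (on positions) or of Y (on values) of a
   length-2 pattern puts on the 0-based lower and upper entries lo < hi of an
   occurrence in [0, n): 0 makes lo the first, 1 makes lo and hi adjacent,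
   2 makes hi the last. *)
Definition gap_at n (x : 'I_3) (lo hi : nat) : bool :=
  match nat_of_ord x with 0 => lo == 0 | 1 => hi == lo.+1 | _ => hi.+1 == n end.

Definition occ2 n t X Y (pi : 'S_n) (a b : 'I_n) : bool :=
  [&& a != b, ((a < b) == (pi a < pi b)) == t,
      [forall x in X, gap_at n x (minn a b) (maxn a b)] &
      [forall y in Y, gap_at n y (minn (pi a) (pi b)) (maxn (pi a) (pi b))]].

Definition contains2 n t X Y (pi : 'S_n) : bool := [exists a, exists b, occ2 t X Y pi a b].

Lemma forall_gap_atE (u v w : nat) X :
  [forall x in X, nth 0 [:: u.+1; v.+1; w.+1] x == (nth 0 [:: 0; u.+1; v.+1; w.+1] x).+1]
  = [forall x in X, gap_at w x u v].
Proof. by apply: eq_forallb => x; congr (_ ==> _); case: x => [[|[|[|m]]] ?]. Qed.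

Lemma occ_at_bvpat2 n s X Y (pi : 'S_n) (i : {ffun 'I_2 -> 'I_n}) :
  @occ_at n (bvpat2 s X Y) pi i =
  (i ord0 < i ord_max) && occ2 (incr2 s) X Y pi (i ord0) (i ord_max).
Proof.
rewrite /occ_at /occ2 /incr2 /=.
have -> : enum 'I_2 = [:: ord0; ord_max] by apply: (inj_map val_inj); rewrite val_enum_ord.
rewrite /= sort_leq_pair minnSS maxnSS !forall_ord2 /= !ltnn /= !forall_gap_atE andbT.
set a := i ord0; set b := i ord_max.
case: (ltnP a b) => [lt_ab|] /=; last by move=> ?.
have ne_ab : a != b by rewrite -val_eqE neq_ltn lt_ab.
have ne_pi : (pi a : nat) != pi b by rewrite perm_val_eq.
have ne_s : (s ord0 : nat) != s ord_max by rewrite perm_val_eq.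
have -> : (pi b < pi a) = ~~ (pi a < pi b) by lia.
have -> : (s ord_max < s ord0) = ~~ (s ord0 < s ord_max) by lia.
by rewrite ne_ab; case: (pi a < pi b); case: (s ord0 < s ord_max).
Qed.

Lemma occ2C n t X Y (pi : 'S_n) a b : occ2 t X Y pi a b = occ2 t X Y pi b a.
Proof.
rewrite /occ2 minnC maxnC (minnC (pi a)) (maxnC (pi a)) eq_sym.
have [-> //|ne_ab] := eqVneq a b.
have ne_pi : (pi a : nat) != pi b by rewrite perm_val_eq.
have ne_ab' : (a : nat) != b by [].
have -> : (b < a) = ~~ (a < b) by lia.
have -> : (pi b < pi a) = ~~ (pi a < pi b) by lia.
by case: (a < b); case: (pi a < pi b).
Qed.

Lemma contains_bvpat2 n s X Y (pi : 'S_n) :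
  contains (bvpat2 s X Y) pi = contains2 (incr2 s) X Y pi.
Proof.
apply/existsP/existsP => [[i]|[a /existsP[b]]].
  by rewrite occ_at_bvpat2 => /andP[_ occ]; exists (i ord0); apply/existsP; exists (i ord_max).
wlog lt_ab : a b / a < b => [hwlog occ|occ].
  have := occ; rewrite {1}/occ2 -val_eqE neq_ltn => /andP[/orP[] lt _].
  - exact: hwlog occ.
  - by apply: hwlog lt _; rewrite occ2C.
exists [ffun x : 'I_2 => if x == ord0 then a else b].
by rewrite occ_at_bvpat2 !ffunE /= lt_ab.
Qed.

Lemma incr2_1 : incr2 1.
Proof. by rewrite /incr2 !perm1. Qed.

Lemma incr2E s : incr2 s = (s ord0 == ord0).
Proof.
rewrite /incr2 -val_eqE /=.
have ne_s : (s ord0 : nat) != s ord_max by rewrite perm_val_eq.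
have := ltn_ord (s ord0); have := ltn_ord (s ord_max); lia.
Qed.

Lemma incr2V s : incr2 s^-1 = incr2 s.
Proof. by rewrite !incr2E; apply/eqP/eqP => h; rewrite -{1}h ?permKV ?permK. Qed.

Lemma rev_permE n (x : 'I_n) : rev_perm n x = rev_ord x.
Proof. by rewrite permE. Qed.

Lemma rev_permK n : involutive (rev_perm n).
Proof. by move=> x; rewrite !rev_permE rev_ordK. Qed.

Lemma incr2_rev s : incr2 (rev_perm 2 * s) = ~~ incr2 s.
Proof.
rewrite /incr2 !permM !rev_permE.
have -> : rev_ord ord0 = ord_max :> 'I_2 by exact: val_inj.
have -> : rev_ord ord_max = ord0 :> 'I_2 by exact: val_inj.
have ne_s : (s ord0 : nat) != s ord_max by rewrite perm_val_eq.
lia.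
Qed.

Lemma incr2_comp s : incr2 (s * rev_perm 2) = ~~ incr2 s.
Proof.
rewrite /incr2 !permM !rev_permE /=.
have ne_s : (s ord0 : nat) != s ord_max by rewrite perm_val_eq.
have := ltn_ord (s ord0); have := ltn_ord (s ord_max); lia.
Qed.

Lemma forall_gap_at_rev n X (a b : 'I_n) :
  [forall x in @rev_ord 3 @: X,
     gap_at n x (minn (rev_ord a) (rev_ord b)) (maxn (rev_ord a) (rev_ord b))]
  = [forall x in X, gap_at n x (minn a b) (maxn a b)].
Proof.
rewrite forall_in_imset; apply: eq_forallb => x; congr (_ ==> _).
have := ltn_ord a; have := ltn_ord b.
by case: x => [[|[|[|m]]] ?] //=; rewrite /gap_at /=; lia.
Qed.

Lemma occ2_inv n t X Y (pi : 'S_n) a b :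
  occ2 t X Y pi^-1 (pi a) (pi b) = occ2 t Y X pi a b.
Proof.
rewrite /occ2 !permK (inj_eq perm_inj).
apply/and4P/and4P => -[ne ord hX hY]; split => //;
  by move: ord; case: (a < b); case: (pi a < pi b).
Qed.

Lemma occ2_rev n t X Y (pi : 'S_n) a b :
  occ2 t X Y (rev_perm n * pi) a b
  = occ2 (~~ t) (@rev_ord 3 @: X) Y pi (rev_perm n a) (rev_perm n b).
Proof.
rewrite /occ2 !permM (inj_eq perm_inj) !rev_permE (forall_gap_at_rev X a b).
have [-> //|ne_ab] := eqVneq a b.
have ne_ab' : (a : nat) != b by [].
have -> : (rev_ord a < rev_ord b) = ~~ (a < b).
  by rewrite /=; have := ltn_ord a; have := ltn_ord b; lia.
by case: (a < b); case: (_ < _); case: t.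
Qed.

Lemma occ2_comp n t X Y (pi : 'S_n) a b :
  occ2 t X Y (pi * rev_perm n) a b = occ2 (~~ t) X (@rev_ord 3 @: Y) pi a b.
Proof.
rewrite /occ2 !permM !rev_permE -(forall_gap_at_rev Y (rev_ord (pi a))) !rev_ordK.
have [-> //|ne_ab] := eqVneq a b.
have ne_pi : (pi a : nat) != pi b by rewrite perm_val_eq.
have -> : (rev_ord (pi a) < rev_ord (pi b)) = ~~ (pi a < pi b).
  by rewrite /=; have := ltn_ord (pi a); have := ltn_ord (pi b); lia.
by case: (a < b); case: (_ < _); case: t.
Qed.

Lemma contains2_inv n t X Y (pi : 'S_n) : contains2 t X Y pi^-1 = contains2 t Y X pi.
Proof.
apply/existsP/existsP => [[a /existsP[b occ]]|[a /existsP[b occ]]].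
  by exists (pi^-1 a)%g; apply/existsP; exists (pi^-1 b)%g; rewrite -occ2_inv !permKV.
by exists (pi a); apply/existsP; exists (pi b); rewrite occ2_inv.
Qed.

Lemma contains2_rev n t X Y (pi : 'S_n) :
  contains2 t X Y (rev_perm n * pi) = contains2 (~~ t) (@rev_ord 3 @: X) Y pi.
Proof.
apply/existsP/existsP => [[a /existsP[b occ]]|[a /existsP[b occ]]].
  by exists (rev_perm n a); apply/existsP; exists (rev_perm n b); rewrite -occ2_rev.
exists (rev_perm n a); apply/existsP; exists (rev_perm n b).
by rewrite occ2_rev !rev_permK.
Qed.

Lemma contains2_comp n t X Y (pi : 'S_n) :
  contains2 t X Y (pi * rev_perm n) = contains2 (~~ t) X (@rev_ord 3 @: Y) pi.
Proof. by apply: eq_existsb => a; apply: eq_existsb => b; rewrite occ2_comp. Qed.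

Lemma a_n_inj_eq p q n (f : 'S_n -> 'S_n) :
  injective f -> (forall pi, contains p (f pi) = contains q pi) -> a_n q n = a_n p n.
Proof.
move=> f_inj fE; rewrite /a_n -[RHS](card_preimset _ f_inj).
by apply: eq_card => pi; rewrite !inE /avoids fE.
Qed.

Lemma a_n_inv n s X Y : a_n (bvpat2 s^-1 Y X) n = a_n (bvpat2 s X Y) n.
Proof.
apply: (a_n_inj_eq (@invg_inj _)) => pi.
by rewrite !contains_bvpat2 incr2V contains2_inv.
Qed.

Lemma a_n_rev n s X Y :
  a_n (bvpat2 (rev_perm 2 * s) (@rev_ord 3 @: X) Y) n = a_n (bvpat2 s X Y) n.
Proof.
apply: (a_n_inj_eq (mulgI (rev_perm n))) => pi.
by rewrite !contains_bvpat2 incr2_rev contains2_rev.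
Qed.

Lemma a_n_comp n s X Y :
  a_n (bvpat2 (s * rev_perm 2) X (@rev_ord 3 @: Y)) n = a_n (bvpat2 s X Y) n.
Proof.
apply: (a_n_inj_eq (mulIg (rev_perm n))) => pi.
by rewrite !contains_bvpat2 incr2_comp contains2_comp.
Qed.

Lemma sym_class_bvpat2 s X Y q : sym_class (bvpat2 s X Y) q ->
  exists s' X' Y', q = bvpat2 s' X' Y' /\ a_n q =1 a_n (bvpat2 s X Y).
Proof.
elim=> [|{}q _ [s' [X' [Y' [-> IH]]]]|{}q _ [s' [X' [Y' [-> IH]]]]|{}q _ [s' [X' [Y' [-> IH]]]]].
- by exists s, X, Y.
- by exists s'^-1%g, Y', X'; split=> // n; rewrite a_n_inv.
- by exists (rev_perm 2 * s')%g, (@rev_ord 3 @: X'), Y'; split=> // n; rewrite a_n_rev.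
- by exists (s' * rev_perm 2)%g, X', (@rev_ord 3 @: Y'); split=> // n; rewrite a_n_comp.
Qed.

Lemma a_n_perm_maps p m (x y : 'I_m) :
  (forall pi : 'S_m, contains p pi = (pi x != y)) -> a_n p m = m.-1`!.
Proof.
move=> pE; rewrite /a_n -(card_perm_maps x y).
by apply: eq_card => pi; rewrite !inE /avoids pE negbK.
Qed.

Lemma contains_pat1 m (pi : 'S_m.+1) : contains pat1 pi = (pi ord_max != ord0).
Proof.
rewrite contains_bvpat2 incr2_1.
apply/existsP/idP => [[a /existsP[b]]|pi_last].
  rewrite /occ2 forall_in_set1 /gap_at inordK // => /and4P[ne_ab ord _ /eqP min0].
  apply: contra_neqN ne_ab => /eqP pi_last.
  have last0 c : (pi c == ord0) = (c == ord_max) by rewrite -pi_last (inj_eq perm_inj).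
  apply: val_inj; move: ord (last0 a) (last0 b) (ltn_ord a) (ltn_ord b).
  rewrite eqb_id -!val_eqE /=; lia.
exists (pi^-1 ord0)%g; apply/existsP; exists ord_max.
rewrite /occ2 forall_in_set0 forall_in_set1 /gap_at inordK // permKV eqb_id /=.
have := ltn_ord (pi^-1 ord0)%g.
have : (pi^-1 ord0)%g != ord_max by apply: contra_neq pi_last => <-; rewrite permKV.
move: pi_last; rewrite -!val_eqE /=; lia.
Qed.

(* If pi_1 = n, position 1 holds the largest value and starts no rising pair. *)
Lemma contains2_first_max m Y (pi : 'S_m.+1) :
  pi ord0 = ord_max -> ~~ contains2 true [set inord 0] Y pi.
Proof.
move=> pi_first; apply/existsP => -[a /existsP[b]].
rewrite /occ2 forall_in_set1 /gap_at inordK // eqb_id => /and4P[ne_ab ord /eqP min0 _].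
have first_max c : (pi c == ord_max) = (c == ord0) by rewrite -pi_first (inj_eq perm_inj).
move: ne_ab ord (first_max a) (first_max b) (ltn_ord (pi a)) (ltn_ord (pi b)).
rewrite -!val_eqE /=; lia.
Qed.

Lemma contains_pat2 m (pi : 'S_m.+1) : contains pat2 pi = (pi ord0 != ord_max).
Proof.
rewrite contains_bvpat2 incr2_1.
apply/idP/idP => [|pi_first]; first by apply: contraLR => /negbNE/eqP/contains2_first_max.
have lt_m : pi ord0 < m by move: pi_first; rewrite -val_eqE /=; have := ltn_ord (pi ord0); lia.
set b := (pi^-1 (inord (pi ord0).+1))%g.
have pi_b : pi b = (pi ord0).+1 :> nat by rewrite /b permKV inordK.
apply/existsP; exists ord0; apply/existsP; exists b.
rewrite /occ2 !forall_in_set1 /gap_at !inordK // eqb_id pi_b /=.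
have : b != ord0 by apply/eqP => b0; move: pi_b; rewrite b0; lia.
rewrite -!val_eqE /=; lia.
Qed.

Lemma contains_pat3 m (pi : 'S_m.+1) : contains pat3 pi = (pi ord0 != ord_max).
Proof.
rewrite contains_bvpat2 incr2_1.
apply/idP/idP => [|pi_first]; first by apply: contraLR => /negbNE/eqP/contains2_first_max.
set b := (pi^-1 ord_max)%g.
have pi_b : pi b = ord_max by rewrite /b permKV.
apply/existsP; exists ord0; apply/existsP; exists b.
rewrite /occ2 !forall_in_set1 /gap_at !inordK // eqb_id pi_b /=.
have : b != ord0 by apply: contra_neq pi_first => <-.
move: pi_first; rewrite -!val_eqE /=; have := ltn_ord (pi ord0); lia.
Qed.

Theorem mainTheorem2 (p : bvpat) :
  sym_class pat1 p \/ sym_class pat2 p \/ sym_class pat3 p ->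
  forall n : nat, 0 < n -> a_n p n = (n.-1)`!.
Proof.
move=> p_sym [//|m] _.
case: p_sym => [|[]] /sym_class_bvpat2[_ [_ [_ [_ ->]]]].
- exact: a_n_perm_maps (@contains_pat1 m).
- exact: a_n_perm_maps (@contains_pat2 m).
- exact: a_n_perm_maps (@contains_pat3 m).
Qed.
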